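(* The following weakening rules are admissible in $\mathsf{G}(\mathbf{KT}^+_D)$: for all finite multisets $\Gamma,\Delta$ of formulas, every finite multiset $\Sigma$ of outmost-boxed formulas, every formula $\alpha$ and every $G\in\mathsf{Grp}$, if $\vdash\Sigma\mid\Gamma\Rightarrow\Delta$ then $\vdash\Sigma\mid\Gamma\Rightarrow\Delta,\alpha$, $\vdash\Sigma\mid\alpha,\Gamma\Rightarrow\Delta$, and $\vdash\Sigma,D_G\alpha\mid\Gamma\Rightarrow\Delta$.
   Context: Language: fix a finite nonempty set $\mathsf{Agt}$ of agents and a countable set $\mathsf{Prop}$ of propositional variables; $\mathsf{Grp}$ is the set of nonempty subsets of $\mathsf{Agt}$. Formulas: $\alpha::=p\mid\bot\mid\alpha\wedge\alpha\mid\alpha\vee\alpha\mid\alpha\rightarrow\alpha\mid\neg\alpha\mid D_G\alpha$ ($p\in\mathsf{Prop}$, $G\in\mathsf{Grp}$). Outmost-boxed formula: one of the form $D_G\gamma$. Calculus $\mathsf{G}(\mathbf{KT}^+_D)$ ($\vdash$ denotes derivability: root of a finite tree built from initial sequents by the rules): a T-sequent $\Sigma\mid\Gamma\Rightarrow\Delta$ consists of finite multisets $\Gamma,\Delta$ of formulas and a finite multiset $\Sigma$ of outmost-boxed formulas. Initial sequents: $\Sigma\mid\Gamma,p\Rightarrow p,\Delta$ ($p\in\mathsf{Prop}$) and $\Sigma\mid\bot,\Gamma\Rightarrow\Delta$. Propositional rules (with $\Sigma$ unchanged): $(R\wedge)$ from $\Sigma\mid\Gamma\Rightarrow\Delta,\alpha_1$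 and $\Sigma\mid\Gamma\Rightarrow\Delta,\alpha_2$ infer $\Sigma\mid\Gamma\Rightarrow\Delta,\alpha_1\wedge\alpha_2$; $(L\wedge)$ from $\Sigma\mid\alpha_1,\alpha_2,\Gamma\Rightarrow\Delta$ infer $\Sigma\mid\alpha_1\wedge\alpha_2,\Gamma\Rightarrow\Delta$; $(R\vee)$ from $\Sigma\mid\Gamma\Rightarrow\Delta,\alpha_1,\alpha_2$ infer $\Sigma\mid\Gamma\Rightarrow\Delta,\alpha_1\vee\alpha_2$; $(L\vee)$ from $\Sigma\mid\alpha_1,\Gamma\Rightarrow\Delta$ and $\Sigma\mid\alpha_2,\Gamma\Rightarrow\Delta$ infer $\Sigma\mid\alpha_1\vee\alpha_2,\Gamma\Rightarrow\Delta$; $(R\rightarrow)$ from $\Sigma\mid\alpha_1,\Gamma\Rightarrow\Delta,\alpha_2$ infer $\Sigma\mid\Gamma\Rightarrow\Delta,\alpha_1\rightarrow\alpha_2$; $(L\rightarrow)$ from $\Sigma\mid\Gamma\Rightarrow\Delta,\alpha_1$ and $\Sigma\mid\alpha_2,\Gamma\Rightarrow\Delta$ infer $\Sigma\mid\alpha_1\rightarrow\alpha_2,\Gamma\Rightarrow\Delta$; $(R\neg)$ from $\Sigma\mid\alpha,\Gamma\Rightarrow\Delta$ infer $\Sigma\mid\Gamma\Rightarrow\Delta,\neg\alpha$; $(L\neg)$ from $\Sigma\mid\Gamma\Rightarrow\Delta,\alpha$ infer $\Sigma\mid\neg\alpha,\Gamma\Rightarrow\Delta$. Modal rules: $(D_K^+)$: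 from $\emptyset\mid\alpha_1,\dots,\alpha_n\Rightarrow\beta$ ($n\ge0$) infer $\Sigma,D_{G_1}\alpha_1,\dots,D_{G_n}\alpha_n\mid\Pi\Rightarrow D_G\beta,\Omega$, provided $G_i\subseteq G$ for all $i$, $\Sigma$ consists only of formulas $D_H\gamma$ with $H\not\subseteq G$, $\Pi$ only of propositional variables and $\bot$, and $\Omega$ only of propositional variables, $\bot$ and outmost-boxed formulas; $(D_T^+)$: from $D_G\alpha,\Sigma\mid\Gamma,\alpha\Rightarrow\Delta$ infer $\Sigma\mid\Gamma,D_G\alpha\Rightarrow\Delta$. *)

From mathcomp Require Import all_boot.
From Stdlib Require Import List Permutation.

Set Implicit Arguments.
Unset Strict Implicit.
Unset Printing Implicit Defensive.

Section KTD.
Variables (Agt : finType) (Prp : countType).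

Definition grp := {G : {set Agt} | G != set0}.
Definition grp_set (G : grp) : {set Agt} := proj1_sig G.

Inductive form : Type :=
| Var  : Prp -> form
| Bot  : form
| And  : form -> form -> form
| Or   : form -> form -> form
| Imp  : form -> form -> form
| Neg  : form -> form
| Dbox : grp -> form -> form.

(* An outmost-boxed formula D_G g is represented by the pair (G, g). *)
Definition boxed := (grp * form)%type.
Definition unbox (b : boxed) : form := Dbox b.1 b.2.

Definition atomic_or_bot (f : form) : Prop :=
  match f with Var _ | Bot => True | _ => False end.
Definition atomic_bot_or_boxed (f : form) : Prop :=
  match f with Var _ | Bot | Dbox _ _ => True | _ => False end.

(* Multisets are represented by lists; every rule conclusion is taken up to
   permutation of each of the three components (multiset equality). *)
Definition seq_eq (S1 : list boxed) (G1 D1 : list form)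
                  (S2 : list boxed) (G2 D2 : list form) : Prop :=
  Permutation S1 S2 /\ Permutation G1 G2 /\ Permutation D1 D2.

(* derivable Sig Gam Del  :=  |- Sig | Gam => Del  in G(KT+_D) *)
Inductive derivable : list boxed -> list form -> list form -> Prop :=
| d_init S G D p S' G' D' :
    seq_eq S (Var p :: G) (Var p :: D) S' G' D' -> derivable S' G' D'
| d_bot S G D S' G' D' :
    seq_eq S (Bot :: G) D S' G' D' -> derivable S' G' D'
| d_Rand S G D a1 a2 S' G' D' :
    derivable S G (a1 :: D) -> derivable S G (a2 :: D) ->
    seq_eq S G (And a1 a2 :: D) S' G' D' -> derivable S' G' D'
| d_Land S G D a1 a2 S' G' D' :
    derivable S (a1 :: a2 :: G) D ->
    seq_eq S (And a1 a2 :: G) D S' G' D' -> derivable S' G' D'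
| d_Ror S G D a1 a2 S' G' D' :
    derivable S G (a1 :: a2 :: D) ->
    seq_eq S G (Or a1 a2 :: D) S' G' D' -> derivable S' G' D'
| d_Lor S G D a1 a2 S' G' D' :
    derivable S (a1 :: G) D -> derivable S (a2 :: G) D ->
    seq_eq S (Or a1 a2 :: G) D S' G' D' -> derivable S' G' D'
| d_Rimp S G D a1 a2 S' G' D' :
    derivable S (a1 :: G) (a2 :: D) ->
    seq_eq S G (Imp a1 a2 :: D) S' G' D' -> derivable S' G' D'
| d_Limp S G D a1 a2 S' G' D' :
    derivable S G (a1 :: D) -> derivable S (a2 :: G) D ->
    seq_eq S (Imp a1 a2 :: G) D S' G' D' -> derivable S' G' D'
| d_Rneg S G D a S' G' D' :
    derivable S (a :: G) D ->
    seq_eq S G (Neg a :: D) S' G' D' -> derivable S' G' D'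
| d_Lneg S G D a S' G' D' :
    derivable S G (a :: D) ->
    seq_eq S (Neg a :: G) D S' G' D' -> derivable S' G' D'
| d_DK S B Pi Om (Gr : grp) b S' G' D' :
    derivable nil (map snd B) (b :: nil) ->
    (forall x, In x B -> grp_set x.1 \subset grp_set Gr) ->
    (forall x, In x S -> ~~ (grp_set x.1 \subset grp_set Gr)) ->
    (forall f, In f Pi -> atomic_or_bot f) ->
    (forall f, In f Om -> atomic_bot_or_boxed f) ->
    seq_eq (S ++ B) Pi (Dbox Gr b :: Om) S' G' D' -> derivable S' G' D'
| d_DT S G D (Gr : grp) a S' G' D' :
    derivable ((Gr, a) :: S) (a :: G) D ->
    seq_eq S (Dbox Gr a :: G) D S' G' D' -> derivable S' G' D'.

End KTD.

(** Weakening by an atom or [bot] on the left, and by an atom, [bot] or a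
   boxed formula on the right, is pushed up to the leaves of a derivation:
   the modal rule [(D_K^+)] absorbs such formulas into its side contexts [Pi]
   and [Om].  Weakening of the boxed context [Sig] by [D_H a] is pushed up
   in the same way, except through [(D_K^+)] with [H] included in the
   principal group, where [a] has to be added to the antecedent of the
   premise; so it holds for [a] as soon as left weakening by [a] does.
   Weakening by an arbitrary formula then follows by induction on the
   formula, introducing it by its own logical rule from weakened premises;
   a boxed formula [D_H a] on the left is introduced by [(D_T^+)]. *)

From mathcomp Require Import all_boot.
From Stdlib Require Import List Permutation.

Set Implicit Arguments.
Unset Strict Implicit.
Unset Printing Implicit Defensive.

Section Weakening.
Variables (Agt : finType) (Prp : countType).
Notation derivable := (@derivable Agt Prp).
Notation seq_eq := (@seq_eq Agt Prp).

Lemma seq_eq_refl S G D : seq_eq S G D S G D.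
Proof. by split; [|split]. Qed.

Lemma seq_eq_perm S G D S1 G1 D1 S2 G2 D2 :
  Permutation S1 S2 -> Permutation G1 G2 -> Permutation D1 D2 ->
  seq_eq S G D S1 G1 D1 -> seq_eq S G D S2 G2 D2.
Proof.
by move=> pS pG pD [eS [eG eD]]; split; [|split]; apply: Permutation_trans; eauto.
Qed.

Lemma seq_eq_consS S G D S' G' D' b :
  seq_eq S G D S' G' D' -> seq_eq (b :: S) G D (b :: S') G' D'.
Proof. by move=> [eS [eG eD]]; split; [|split]; try apply: perm_skip. Qed.

Lemma seq_eq_consL S G D S' G' D' f :
  seq_eq S G D S' G' D' -> seq_eq S (f :: G) D S' (f :: G') D'.
Proof. by move=> [eS [eG eD]]; split; [|split]; try apply: perm_skip. Qed.

Lemma seq_eq_consR S G D S' G' D' f :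
  seq_eq S G D S' G' D' -> seq_eq S G (f :: D) S' G' (f :: D').
Proof. by move=> [eS [eG eD]]; split; [|split]; try apply: perm_skip. Qed.

Lemma seq_eq_consL_under S G D S' G' D' x f :
  seq_eq S (x :: G) D S' G' D' -> seq_eq S (x :: f :: G) D S' (f :: G') D'.
Proof.
move=> /(seq_eq_consL f) [eS [eG eD]]; split; [|split] => //.
exact: Permutation_trans (perm_swap _ _ _) eG.
Qed.

Lemma seq_eq_consR_under S G D S' G' D' x f :
  seq_eq S G (x :: D) S' G' D' -> seq_eq S G (x :: f :: D) S' G' (f :: D').
Proof.
move=> /(seq_eq_consR f) [eS [eG eD]]; split; [|split] => //.
exact: Permutation_trans (perm_swap _ _ _) eD.
Qed.

Lemma derivable_perm S G D S' G' D' :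
  Permutation S S' -> Permutation G G' -> Permutation D D' ->
  derivable S G D -> derivable S' G' D'.
Proof.
move=> pS pG pD d; case: d pS pG pD => [> e|> e|> d1 d2 e|> d e|> d e|> d1 d2 e|> d e|> d1 d2 e
  |> d e|> d e|> d hB hS hPi hOm e|> d e] pS pG pD;
  have {}e := seq_eq_perm pS pG pD e.
- exact: d_init e.
- exact: d_bot e.
- exact: d_Rand d1 d2 e.
- exact: d_Land d e.
- exact: d_Ror d e.
- exact: d_Lor d1 d2 e.
- exact: d_Rimp d e.
- exact: d_Limp d1 d2 e.
- exact: d_Rneg d e.
- exact: d_Lneg d e.
- exact: d_DK d hB hS hPi hOm e.
- exact: d_DT d e.
Qed.

Lemma derivable_swapL S G D x y :
  derivable S (x :: y :: G) D -> derivable S (y :: x :: G) D.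
Proof. exact/derivable_perm/Permutation_refl/perm_swap/Permutation_refl. Qed.

Lemma derivable_swapR S G D x y :
  derivable S G (x :: y :: D) -> derivable S G (y :: x :: D).
Proof. exact/derivable_perm/perm_swap/Permutation_refl/Permutation_refl. Qed.

Lemma derivable_weakenR_atomic_boxed f S G D :
  atomic_bot_or_boxed f -> derivable S G D -> derivable S G (f :: D).
Proof.
move=> hf; elim=> {S G D}.
- by move=> > e; apply: d_init (seq_eq_consR_under f e).
- by move=> > e; apply: d_bot (seq_eq_consR f e).
- move=> > _ d1 _ d2 e.
  exact: d_Rand (derivable_swapR d1) (derivable_swapR d2) (seq_eq_consR_under f e).
- by move=> > _ d e; apply: d_Land d (seq_eq_consR f e).
- move=> > _ d e; apply: d_Ror _ (seq_eq_consR_under f e).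
  exact: derivable_perm (Permutation_middle [:: _; _] _ _) d.
- by move=> > _ d1 _ d2 e; apply: d_Lor d1 d2 (seq_eq_consR f e).
- by move=> > _ d e; apply: d_Rimp (derivable_swapR d) (seq_eq_consR_under f e).
- by move=> > _ d1 _ d2 e; apply: d_Limp (derivable_swapR d1) d2 (seq_eq_consR f e).
- by move=> > _ d e; apply: d_Rneg d (seq_eq_consR_under f e).
- by move=> > _ d e; apply: d_Lneg (derivable_swapR d) (seq_eq_consR f e).
- move=> > d _ hB hS hPi hOm e.
  apply: d_DK d hB hS hPi _ (seq_eq_consR_under f e).
  by move=> g /= [<-|/hOm].
- by move=> > _ d e; apply: d_DT d (seq_eq_consR f e).
Qed.

Lemma derivable_weakenL_atomic f S G D :
  atomic_or_bot f -> derivable S G D -> derivable S (f :: G) D.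
Proof.
move=> hf; elim=> {S G D}.
- by move=> > e; apply: d_init (seq_eq_consL_under f e).
- by move=> > e; apply: d_bot (seq_eq_consL_under f e).
- by move=> > _ d1 _ d2 e; apply: d_Rand d1 d2 (seq_eq_consL f e).
- move=> > _ d e; apply: d_Land _ (seq_eq_consL_under f e).
  exact: derivable_perm (Permutation_middle [:: _; _] _ _) _ d.
- by move=> > _ d e; apply: d_Ror d (seq_eq_consL f e).
- move=> > _ d1 _ d2 e.
  exact: d_Lor (derivable_swapL d1) (derivable_swapL d2) (seq_eq_consL_under f e).
- by move=> > _ d e; apply: d_Rimp (derivable_swapL d) (seq_eq_consL f e).
- by move=> > _ d1 _ d2 e; apply: d_Limp d1 (derivable_swapL d2) (seq_eq_consL_under f e).
- by move=> > _ d e; apply: d_Rneg (derivable_swapL d) (seq_eq_consL f e).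
- by move=> > _ d e; apply: d_Lneg d (seq_eq_consL_under f e).
- move=> > d _ hB hS hPi hOm e.
  apply: d_DK d hB hS _ hOm (seq_eq_consL f e).
  by move=> g /= [<-|/hPi].
- by move=> > _ d e; apply: d_DT (derivable_swapL d) (seq_eq_consL_under f e).
Qed.

Lemma derivable_weakenS H a :
  (forall S G D, derivable S G D -> derivable S (a :: G) D) ->
  forall S G D, derivable S G D -> derivable ((H, a) :: S) G D.
Proof.
move=> weakenL_a S G D; elim=> {S G D}.
- by move=> > e; apply: d_init (seq_eq_consS (H, a) e).
- by move=> > e; apply: d_bot (seq_eq_consS (H, a) e).
- by move=> > _ d1 _ d2 e; apply: d_Rand d1 d2 (seq_eq_consS (H, a) e).
- by move=> > _ d e; apply: d_Land d (seq_eq_consS (H, a) e).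
- by move=> > _ d e; apply: d_Ror d (seq_eq_consS (H, a) e).
- by move=> > _ d1 _ d2 e; apply: d_Lor d1 d2 (seq_eq_consS (H, a) e).
- by move=> > _ d e; apply: d_Rimp d (seq_eq_consS (H, a) e).
- by move=> > _ d1 _ d2 e; apply: d_Limp d1 d2 (seq_eq_consS (H, a) e).
- by move=> > _ d e; apply: d_Rneg d (seq_eq_consS (H, a) e).
- by move=> > _ d e; apply: d_Lneg d (seq_eq_consS (H, a) e).
- move=> S B Pi Om Gr b S' G' D' d _ hB hS hPi hOm e; case hH: (grp_set H \subset grp_set Gr).
  + apply: (d_DK (B := (H, a) :: B)) (weakenL_a _ _ _ d) _ hS hPi hOm _.
      by move=> x /= [<-|/hB].
    case: e => eS eGD; split => //.
    exact: Permutation_trans (Permutation_sym (Permutation_middle _ _ _)) (perm_skip _ eS).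
  + apply: (d_DK (S := (H, a) :: S)) d hB _ hPi hOm (seq_eq_consS (H, a) e).
    by move=> x /= [<-|/hS]; rewrite ?hH.
- move=> > _ d e; apply: d_DT _ (seq_eq_consS (H, a) e).
  exact: derivable_perm (perm_swap _ _ _) _ _ d.
Qed.

Lemma derivable_weaken a S G D :
  derivable S G D -> derivable S (a :: G) D /\ derivable S G (a :: D).
Proof.
elim: a S G D => [p||a1 IH1 a2 IH2|a1 IH1 a2 IH2|a1 IH1 a2 IH2|a1 IH1|H a1 IH1]
  S G D d.
- by split; [apply: derivable_weakenL_atomic|apply: derivable_weakenR_atomic_boxed].
- by split; [apply: derivable_weakenL_atomic|apply: derivable_weakenR_atomic_boxed].
- split.
  + exact: d_Land (IH1 _ _ _ (IH2 _ _ _ d).1).1 (seq_eq_refl _ _ _).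
  + exact: d_Rand (IH1 _ _ _ d).2 (IH2 _ _ _ d).2 (seq_eq_refl _ _ _).
- split.
  + exact: d_Lor (IH1 _ _ _ d).1 (IH2 _ _ _ d).1 (seq_eq_refl _ _ _).
  + exact: d_Ror (IH1 _ _ _ (IH2 _ _ _ d).2).2 (seq_eq_refl _ _ _).
- split.
  + exact: d_Limp (IH1 _ _ _ d).2 (IH2 _ _ _ d).1 (seq_eq_refl _ _ _).
  + exact: d_Rimp (IH1 _ _ _ (IH2 _ _ _ d).2).1 (seq_eq_refl _ _ _).
- split.
  + exact: d_Lneg (IH1 _ _ _ d).2 (seq_eq_refl _ _ _).
  + exact: d_Rneg (IH1 _ _ _ d).1 (seq_eq_refl _ _ _).
- split; last exact: derivable_weakenR_atomic_boxed.
  have weakenL_a1 S' G' D' (d' : derivable S' G' D') := (IH1 S' G' D' d').1.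
  exact: d_DT (derivable_weakenS H weakenL_a1 (weakenL_a1 _ _ _ d)) (seq_eq_refl _ _ _).
Qed.

End Weakening.

Theorem proposition6p8 (Agt : finType) (Prp : countType) :
  (0 < #|Agt|)%N ->
  forall (Sig : list (boxed Agt Prp)) (Gam Del : list (form Agt Prp))
         (a : form Agt Prp) (G : grp Agt),
    derivable Sig Gam Del ->
    derivable Sig Gam (Del ++ a :: nil) /\
    derivable Sig (a :: Gam) Del /\
    derivable (Sig ++ (G, a) :: nil) Gam Del.
Proof.
move=> _ Sig Gam Del a G d.
have [weakenL weakenR] := derivable_weaken a d.
split; [|split] => //.
- exact: derivable_perm (Permutation_cons_append _ _) weakenR.
- have weakenL_a S G' D (d' : derivable S G' D) := (derivable_weaken a d').1.
  exact: derivable_perm (Permutation_cons_append _ _) _ _ (derivable_weakenS G weakenL_a d).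
Qed.
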